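(* In the setting below, for fixed $\boldsymbol\lambda\in(0,\infty)^K$, $$\max_{1\le i\le n}\frac1n\Big|\operatorname{Tr}\Big(\mathbf M_i^2\sum_{j\ne i}\frac{z_jz_j^\top}{n}\Big)-\operatorname{Tr}\Big(\mathbf M^2\frac{\mathbf Z^\top\mathbf Z}{n}\Big)\Big|\to0\quad\text{almost surely.}$$
   Context: Setting: $n\to\infty$, $p=p(n)$ features in $K$ fixed disjoint groups $\mathcal G_g$ with $p_g/n\to\gamma_g>0$. $\mathbf Z$ is $n\times p$ with rows $z_i^\top$, where the $z_i$ are i.i.d. vectors with i.i.d. entries of mean $0$, variance $1$ and uniformly bounded $(8+\eta)$-th moments for some $\eta>0$. $\boldsymbol\Sigma$ is a deterministic $p\times p$ covariance matrix with eigenvalues in $[h_1,h_2]$, fixed $h_1,h_2>0$. $\boldsymbol\Lambda$ is the $p\times p$ diagonal matrix with entry $\lambda_g$ at $j\in\mathcal G_g$. $\mathbf M=(\mathbf Z^\top\mathbf Z/n+\boldsymbol\Sigma^{-1/2}\boldsymbol\Lambda\boldsymbol\Sigma^{-1/2})^{-1}$ and $\mathbf M_i=(\mathbf Z^\top\mathbf Z/n+\boldsymbol\Sigma^{-1/2}\boldsymbol\Lambda\boldsymbol\Sigma^{-1/2}-z_iz_i^\top/n)^{-1}$. *)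

From HB Require Import structures.
From mathcomp Require Import all_boot all_order all_algebra.
From mathcomp Require Import all_classical all_reals all_analysis.
Set Implicit Arguments. Unset Strict Implicit. Unset Printing Implicit Defensive.
Import Order.TTheory GRing.Theory Num.Theory.
Import numFieldNormedType.Exports.
Local Open Scope classical_set_scope.
Local Open Scope ring_scope.

(* Mutual independence of a finite family of real random variables:
   product rule for every choice of Borel sets (taking B i = setT recovers
   every finite subfamily). *)
Definition mutually_independent d (T : measurableType d) (R : realType)
  (P : probability T R) (I : finType) (X : I -> T -> R) : Prop :=
  forall B : I -> set R, (forall i, measurable (B i)) ->
    P (\bigcap_(i in [set: I]) (X i @^-1` B i)) = (\prod_(i : I) P (X i @^-1` B i))%E.

Definition identically_distributed d (T : measurableType d) (R : realType)
  (P : probability T R) (I : Type) (X : I -> T -> R) : Prop :=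
  forall i j (B : set R), measurable B -> P (X i @^-1` B) = P (X j @^-1` B).

Definition is_inv_sqrt (R : realType) (m : nat) (Sig S : 'M[R]_m) : Prop :=
  S^T = S /\ (forall a, eigenvalue S a -> 0 < a) /\ S *m S = invmx Sig.

Definition outer_row (R : realType) (n p : nat) (Z : 'M[R]_(n, p)) (i : 'I_n)
  : 'M[R]_p := (row i Z)^T *m row i Z.

From HB Require Import structures.
From mathcomp Require Import all_boot all_order all_algebra.
From mathcomp Require Import all_classical all_reals all_analysis.
From mathcomp Require Import complex spectral sesquilinear.
From mathcomp Require Import ring lra.
Import Order.TTheory GRing.Theory Num.Theory.
Import numFieldNormedType.Exports.
Local Open Scope classical_set_scope.
Local Open Scope ring_scope.
Set Implicit Arguments. Unset Strict Implicit. Unset Printing Implicit Defensive.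

(* The bound is deterministic: for every outcome each term of the maximum is
   O(1) uniformly in n and i, so the factor 1/n sends the maximum to 0 everywhere.  Write G for the
   leave-one-out matrix (1/n) sum_{j<>i} z_j z_j^T and B = S Lam S, which is
   coercive with constant beta = min lam / h2 because S^2 = Sigma^-1; then
   A = (G + B) + c u^T u with c = 1/n and u = z_i.  Since
   tr (M^2 H) = tr M - tr (M^2 B) for M = (H + B)^-1, the Sherman-Morrison formula
   M = N - q y^T y (N = (G + B)^-1, y = u N, q = c / (1 + c u N u^T)) turns the
   difference into q |y|^2 - 2 q y B N y^T + q^2 |y|^2 y B y^T, and each of these
   terms is bounded by a polynomial in 1/beta using only that B is coercive and
   G positive semidefinite. *)

Lemma unitmx_ker0 (F : fieldType) m (X : 'M[F]_m) :
  (forall y : 'rV_m, y *m X = 0 -> y = 0) -> X \in unitmx.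
Proof.
move=> ker0; rewrite -row_free_unit -kermx_eq0; apply/eqP/row_matrixP => i.
by rewrite row0; apply: ker0; rewrite -row_mul mulmx_ker row0.
Qed.

Section QuadraticForm.
Variables (R : realFieldType) (m : nat).
Implicit Types (y z u : 'rV[R]_m) (X Y : 'M[R]_m) (a be : R).

Definition dot y z : R := (y *m z^T) 0 0.
Definition qf y X : R := dot (y *m X) y.

Definition psdmx X := forall y, 0 <= qf y X.
Definition coercivemx be X := forall y, be * dot y y <= qf y X.

Lemma dotE y z : dot y z = \sum_j y 0 j * z 0 j.
Proof. by rewrite /dot mxE; apply: eq_bigr => j _; rewrite mxE. Qed.

Lemma dotC y z : dot y z = dot z y.
Proof. by rewrite !dotE; apply: eq_bigr => j _; rewrite mulrC. Qed.

Lemma dotDl y y' z : dot (y + y') z = dot y z + dot y' z.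
Proof. by rewrite /dot mulmxDl mxE. Qed.

Lemma dotZl a y z : dot (a *: y) z = a * dot y z.
Proof. by rewrite /dot -scalemxAl mxE. Qed.

Lemma dot0l z : dot 0 z = 0.
Proof. by rewrite -(scale0r 0) dotZl mul0r. Qed.

Lemma dotNl y z : dot (- y) z = - dot y z.
Proof. by rewrite -scaleN1r dotZl mulN1r. Qed.

Lemma dotDr y z z' : dot y (z + z') = dot y z + dot y z'.
Proof. by rewrite dotC dotDl !(dotC y). Qed.

Lemma dotZr a y z : dot y (a *: z) = a * dot y z.
Proof. by rewrite dotC dotZl dotC. Qed.

Lemma dotNr y z : dot y (- z) = - dot y z.
Proof. by rewrite dotC dotNl dotC. Qed.

Lemma dot_ge0 y : 0 <= dot y y.
Proof. by rewrite dotE; apply: sumr_ge0 => j _; rewrite -expr2 sqr_ge0. Qed.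

Lemma dot_gt0 y : y != 0 -> 0 < dot y y.
Proof.
move=> yn0; rewrite lt_def dot_ge0 andbT; apply: contraNN yn0.
rewrite dotE psumr_eq0 => [/allP y0|j _]; last by rewrite -expr2 sqr_ge0.
apply/eqP/rowP => j; have := y0 j (mem_index_enum j).
by rewrite /= -expr2 sqrf_eq0 mxE => /eqP.
Qed.

Lemma dot_symmx y z X : X^T = X -> dot (y *m X) z = dot (z *m X) y.
Proof.
move=> XS; rewrite /dot; transitivity ((y *m X *m z^T)^T 0 0); first by rewrite [RHS]mxE.
by rewrite !trmx_mul trmxK XS mulmxA.
Qed.

Lemma qfD y X Y : qf y (X + Y) = qf y X + qf y Y.
Proof. by rewrite /qf mulmxDr dotDl. Qed.

Lemma qfZ a y X : qf y (a *: X) = a * qf y X.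
Proof. by rewrite /qf -scalemxAr dotZl. Qed.

Lemma qf_outer y u : qf y (u^T *m u) = dot y u ^+ 2.
Proof.
rewrite /qf mulmxA [y *m u^T]mx11_scalar -/(dot y u) mul_scalar_mx dotZl.
by rewrite dotC.
Qed.

Lemma mxtrace_outer y z : \tr (y^T *m z) = dot z y.
Proof. by rewrite mxtrace_mulC trace_mx11. Qed.

Lemma psdmx_outer u : psdmx (u^T *m u).
Proof. by move=> y; rewrite qf_outer sqr_ge0. Qed.

Lemma psdmxZ a X : 0 <= a -> psdmx X -> psdmx (a *: X).
Proof. by move=> a0 Xpsd y; rewrite qfZ mulr_ge0. Qed.

Lemma psdmx_sum (I : Type) (r : seq I) (P : pred I) (F : I -> 'M[R]_m) :
  (forall i, P i -> psdmx (F i)) -> psdmx (\sum_(i <- r | P i) F i).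
Proof.
move=> Fpsd y; apply: (big_ind (fun X => 0 <= qf y X)) => //.
- by rewrite /qf mulmx0 dot0l.
- by move=> X Y X0 Y0; rewrite qfD addr_ge0.
- by move=> i /Fpsd.
Qed.

Lemma coercivemx_psd be X : 0 <= be -> coercivemx be X -> psdmx X.
Proof. by move=> be_ge0 Xco y; apply: le_trans (Xco y); rewrite mulr_ge0 ?dot_ge0. Qed.

Lemma coercivemxD be X Y : psdmx X -> coercivemx be Y -> coercivemx be (X + Y).
Proof. by move=> Xpsd Yco y; rewrite qfD -[leLHS]add0r lerD. Qed.

Lemma coercivemx_unit be X : 0 < be -> coercivemx be X -> X \in unitmx.
Proof.
move=> be_gt0 Xco; apply: unitmx_ker0 => y yX; apply/eqP.
by apply: contraTT (Xco y) => yn0; rewrite /qf yX dot0l -ltNge mulr_gt0 ?dot_gt0.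
Qed.

Lemma psdmx_dot_le X y z : X^T = X -> psdmx X ->
  2 * `|dot (y *m X) z| <= qf y X + qf z X.
Proof.
move=> XS Xpsd.
have expand s : qf (y + s *: z) X = qf y X + 2 * s * dot (y *m X) z + s ^+ 2 * qf z X.
  rewrite /qf mulmxDl -scalemxAl !(dotDl, dotDr, dotZl, dotZr).
  by rewrite (dot_symmx z y XS); ring.
have := Xpsd (y + 1 *: z); have := Xpsd (y + (-1) *: z).
rewrite !expand -ler_pdivlMl // ler_norml; lra.
Qed.

Lemma coercivemx_inv be X y : 0 < be -> X^T = X -> coercivemx be X ->
  be * qf y (invmx X) <= dot y y.
Proof.
move=> be_gt0 XS Xco; set z := y *m invmx X.
have zX : z *m X = y by rewrite mulmxKV // (coercivemx_unit be_gt0 Xco).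
have -> : qf y (invmx X) = dot y z by rewrite /qf dotC.
have yz_ge : be * (be * dot z z) <= be * dot y z.
  by rewrite ler_wpM2l ?(ltW be_gt0) // -{1}zX Xco.
have := dot_ge0 (y - be *: z).
rewrite !(dotDl, dotDr, dotNl, dotNr, dotZl, dotZr) (dotC z y); lra.
Qed.

End QuadraticForm.

Lemma invmx_eq (R : comUnitRingType) m (A X : 'M[R]_m) : A *m X = 1%:M -> invmx A = X.
Proof.
move=> AX; have [Au _] := mulmx1_unit AX.
by rewrite -[invmx A]mulmx1 -AX mulKmx.
Qed.

Lemma sherman_morrison (F : fieldType) m (A : 'M[F]_m) (u v : 'rV[F]_m) (c : F) :
  A \in unitmx -> 1 + c * (v *m invmx A *m u^T) 0 0 != 0 ->
  invmx (A + c *: (u^T *m v)) =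
  invmx A - (c / (1 + c * (v *m invmx A *m u^T) 0 0)) *:
              (invmx A *m u^T *m (v *m invmx A)).
Proof.
set N := invmx A; set s := (v *m N *m u^T) 0 0 => Au s1.
set q := c / (1 + c * s); have qE : q * (1 + c * s) = c by rewrite divfK.
apply: invmx_eq; rewrite mulmxDl !mulmxBr mulmxV // -!scalemxAl -!scalemxAr.
have -> : A *m (N *m u^T *m (v *m N)) = u^T *m (v *m N) by rewrite !mulmxA mulmxV ?mul1mx.
have -> : u^T *m v *m (N *m u^T *m (v *m N)) = s *: (u^T *m (v *m N)).
  have -> : u^T *m v *m (N *m u^T *m (v *m N)) = u^T *m (v *m N *m u^T) *m (v *m N).
    by rewrite !mulmxA.
  by rewrite [v *m N *m u^T]mx11_scalar mul_mx_scalar -scalemxAl.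
have cE : c = q + c * (q * s) by rewrite -[in LHS]qE; ring.
set W := u^T *m (v *m N); rewrite -mulmxA -/W !scalerA [in c *: W]cE scalerDl.
by rewrite mulrA addrK subrK.
Qed.

Lemma mxtrace_invmx_sqr_mulB (F : fieldType) m (A B : 'M[F]_m) : A \in unitmx ->
  \tr (invmx A *m invmx A *m (A - B)) = \tr (invmx A) - \tr (invmx A *m invmx A *m B).
Proof. by move=> Au; rewrite mulmxBr -(mulmxA _ _ A) mulVmx // mulmx1 raddfB. Qed.

Section RankOneUpdate.
Variables (R : realFieldType) (m : nat) (G B : 'M[R]_m) (c be : R) (u : 'rV[R]_m).
Hypotheses (be_gt0 : 0 < be) (c_gt0 : 0 < c) (GS : G^T = G) (BS : B^T = B).
Hypotheses (G_psd : psdmx G) (B_coercive : coercivemx be B).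

Local Notation N := (invmx (G + B)).
Local Notation M := (invmx (G + B + c *: (u^T *m u))).
Local Notation y := (u *m N).
Local Notation q := (c / (1 + c * qf u N)).

Let A_coercive : coercivemx be (G + B). Proof. exact: coercivemxD. Qed.
Let A_unit : G + B \in unitmx. Proof. exact: coercivemx_unit A_coercive. Qed.
Let AS : (G + B)^T = G + B. Proof. by rewrite raddfD /= GS BS. Qed.
Let NS : N^T = N. Proof. by rewrite trmx_inv AS. Qed.

Lemma qf_invmx_rank1 : qf u N = qf y (G + B).
Proof. by rewrite /qf mulmxKV // dotC. Qed.

Let uNu_ge0 : 0 <= qf u N.
Proof. by rewrite qf_invmx_rank1; exact: coercivemx_psd (ltW be_gt0) A_coercive _. Qed.

Let denom_gt0 : 0 < 1 + c * qf u N.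
Proof. by rewrite ltr_pwDl // mulr_ge0 ?(ltW c_gt0) ?uNu_ge0. Qed.

Let q_gt0 : 0 < q. Proof. exact: divr_gt0 c_gt0 denom_gt0. Qed.

Lemma invmx_rank1_updateE : M = N - q *: (y^T *m y).
Proof.
have yT : y^T = N *m u^T by rewrite trmx_mul NS.
rewrite sherman_morrison // ?yT ?mulmxA //.
exact: lt0r_neq0 denom_gt0.
Qed.

Lemma mxtrace_rank1_gap :
  \tr (N *m N *m G) - \tr (M *m M *m (G + c *: (u^T *m u))) =
  q * dot y y - 2 * q * dot (y *m B) (y *m N) + q ^+ 2 * dot y y * qf y B.
Proof.
have M_unit : G + B + c *: (u^T *m u) \in unitmx.
  apply: (coercivemx_unit be_gt0); rewrite addrC.
  by apply: coercivemxD A_coercive; apply: psdmxZ (ltW c_gt0) (psdmx_outer u).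
have := mxtrace_invmx_sqr_mulB B A_unit; rewrite addrK => ->.
have MB : G + B + c *: (u^T *m u) - B = G + c *: (u^T *m u) by rewrite addrAC addrK.
have := mxtrace_invmx_sqr_mulB B M_unit; rewrite MB => ->.
have t1 : \tr (N *m (y^T *m y) *m B) = dot (y *m B) (y *m N).
  have NyT : N *m y^T = (y *m N)^T by rewrite [RHS]trmx_mul NS.
  by rewrite (mulmxA N) -(mulmxA (N *m y^T)) NyT mxtrace_outer.
have t2 : \tr (y^T *m y *m N *m B) = dot (y *m B) (y *m N).
  by rewrite -!mulmxA mxtrace_outer !mulmxA (dot_symmx _ _ BS).
have t3 : \tr (y^T *m y *m (y^T *m y) *m B) = dot y y * qf y B.
  rewrite (mulmxA (y^T *m y)) -(mulmxA y^T y) [y *m y^T]mx11_scalar.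
  rewrite mul_mx_scalar -!scalemxAl.
  by rewrite mxtraceZ -(mulmxA y^T) mxtrace_outer.
rewrite invmx_rank1_updateE !mulmxBl !mulmxBr !mulmxBl.
rewrite -!scalemxAl -!scalemxAr -!scalemxAl !raddfB /= !mxtraceZ.
rewrite t1 t2 t3 mxtrace_outer -/(dot y y); ring.
Qed.

Lemma mxtrace_rank1_gap_le :
  `| \tr (N *m N *m G) - \tr (M *m M *m (G + c *: (u^T *m u))) |
    <= 2 / be + 1 + 1 / be ^+ 2.
Proof.
rewrite mxtrace_rank1_gap.
set r := dot y y; set t := qf y B; set b := dot (y *m B) (y *m N); set a := qf y N.
have t_le : t <= qf u N by rewrite qf_invmx_rank1 qfD lerDr.
have qt_le1 : q * t <= 1.
  rewrite mulrAC ler_pdivrMr // mul1r.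
  by rewrite ler_wpDl // ler_wpM2l // ltW.
have qr_le : q * r <= 1 / be.
  rewrite ler_pdivlMr // -(mulrA q) (mulrC r); apply: le_trans qt_le1.
  by rewrite ler_pM2l // B_coercive.
have qa_le : q * a <= 1 / be ^+ 2.
  have a_le : be * a <= r by exact: coercivemx_inv be_gt0 AS A_coercive.
  rewrite expr2 invfM mulrA ler_pdivlMr // -(mulrA q) (mulrC a).
  by apply: le_trans qr_le; rewrite ler_pM2l.
have b_le : 2 * `|b| <= t + a.
  have zB_le : qf (y *m N) B <= a.
    have zA : qf (y *m N) (G + B) = a by rewrite /a /qf mulmxKV // dotC.
    by rewrite -zA qfD lerDr.
  have B_psd := coercivemx_psd (ltW be_gt0) B_coercive.
  have := psdmx_dot_le y (y *m N) BS B_psd; rewrite -/b -/t; lra.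
have qrt_le : 0 <= q ^+ 2 * r * t <= q * r.
  have -> : q ^+ 2 * r * t = (q * r) * (q * t) by ring.
  have qr_ge0 : 0 <= q * r by rewrite mulr_ge0 ?dot_ge0 ?(ltW q_gt0).
  have qt_ge0 : 0 <= q * t.
    by rewrite mulr_ge0 ?(ltW q_gt0) //; exact: coercivemx_psd (ltW be_gt0) B_coercive y.
  by rewrite mulr_ge0 // ler_piMr.
have qb_le : `|2 * q * b| <= 1 + 1 / be ^+ 2.
  rewrite normrM (gtr0_norm (mulr_gt0 _ q_gt0)) // mulrAC mulrC.
  apply: le_trans (_ : q * (t + a) <= _); first by rewrite ler_pM2l.
  by rewrite mulrDr lerD.
have /andP[b_lo b_hi] : - `|2 * q * b| <= 2 * q * b <= `|2 * q * b|.
  by rewrite -ler_norml.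
case/andP: qrt_le => qrt_ge0 qrt_le.
rewrite ler_norml; apply/andP; split; lra.
Qed.

End RankOneUpdate.

Lemma qf_diag (R : realFieldType) m (y d : 'rV[R]_m) :
  qf y (diag_mx d) = \sum_j y 0 j ^+ 2 * d 0 j.
Proof. by rewrite /qf /dot mul_mx_diag mxE; apply: eq_bigr => j _; rewrite !mxE; ring. Qed.

Lemma qf_sandwich (R : realFieldType) m (y : 'rV[R]_m) (S X : 'M[R]_m) :
  S^T = S -> qf y (S *m X *m S) = qf (y *m S) X.
Proof. by move=> SS; rewrite /qf /dot trmx_mul SS !mulmxA. Qed.

Lemma coercivemx_sandwich_diag (R : realFieldType) m (S : 'M[R]_m) (d : 'rV[R]_m) (l be : R) :
  S^T = S -> 0 <= l -> (forall j, l <= d 0 j) -> coercivemx be (S *m S) ->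
  coercivemx (l * be) (S *m diag_mx d *m S).
Proof.
move=> SS l_ge0 d_ge SSco y; rewrite qf_sandwich // qf_diag -mulrA.
apply: le_trans (_ : l * qf y (S *m S) <= _); first by rewrite ler_wpM2l.
rewrite -{1}[S](mulmx1 S) qf_sandwich // -diag_const_mx qf_diag mulr_sumr.
by apply: ler_sum => j _; rewrite [const_mx 1 0 j]mxE mulr1 mulrC ler_wpM2l ?sqr_ge0.
Qed.

Section SymmetricSpectrum.
Local Open Scope sesquilinear_scope.
Variables (R : rcfType) (m : nat) (Q : 'M[R]_m).
Hypothesis QS : Q^T = Q.

Local Notation phi := (real_complex R).
Local Notation QC := (map_mx phi Q).
Local Notation U := (spectralmx QC).
Local Notation d := (spectral_diag QC).

Let QC_hermsym : QC \is hermsymmx.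
Proof.
apply: realsym_hermsym; last by apply/mxOverP => i j; rewrite mxE /= complex_real.
by apply/is_hermitianmxP; rewrite expr0 scale1r map_mx_id // map_trmx QS.
Qed.

Lemma complexmx_spectralE : QC = U^t* *m diag_mx d *m U.
Proof.
have /orthomx_spectralP QCE := hermitian_normalmx QC_hermsym.
by rewrite -invmx_unitary ?spectral_unitarymx.
Qed.

Lemma spectral_diag_eigenvalue k : exists2 a, d 0 k = phi a & eigenvalue Q a.
Proof.
have := mxOverP (hermitian_spectral_diag_real QC_hermsym) 0 k.
case dk : (d 0 k) => [a b]; rewrite complex_real => /eqP b0; subst b.
exists a => //.
have UU : U *m U^t* = 1%:M by apply/unitarymxP; exact: spectral_unitarymx.
have : eigenvalue QC (d 0 k).
  apply/eigenvalueP; exists (row k U).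
    rewrite -row_mul [X in U *m X]complexmx_spectralE !mulmxA UU mul1mx mul_diag_mx.
    by apply/rowP => j; rewrite !mxE.
  apply/eqP => rk0; have := congr1 (fun X : 'rV[R[i]]_m => X 0 k) (row_mul k U (U^t*)).
  by rewrite rk0 mul0mx UU !mxE eqxx /= => /eqP; rewrite oner_eq0.
rewrite !eigenvalue_root_char -map_char_poly dk.
by rewrite /root (_ : (a +i* 0)%C = phi a) // horner_map fmorph_eq0.
Qed.

Lemma complex_qf (w : 'rV[R]_m) (X : 'M[R]_m) :
  phi (qf w X) = (map_mx phi w *m map_mx phi X *m (map_mx phi w)^t*) 0 0.
Proof.
transitivity (map_mx phi (w *m X *m w^T) 0 0); first by rewrite [RHS]mxE.
rewrite !map_mxM map_trmx; congr ((_ *m _) 0 0).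
by apply/matrixP => i j; rewrite !mxE conj_Creal // complex_real.
Qed.

Lemma qf_sqr_le (h : R) (w : 'rV[R]_m) :
  (forall a, eigenvalue Q a -> 0 <= a <= h) -> qf w (Q *m Q) <= h * qf w Q.
Proof.
move=> Q_eig; suff : 0 <= phi h * phi (qf w Q) - phi (qf w (Q *m Q)).
  by rewrite -rmorphM -rmorphB ler0c subr_ge0.
move: (spectral_unitarymx QC) (complexmx_spectralE) (spectral_diag_eigenvalue).
set P := spectralmx _; set D := spectral_diag _ => P_unitary QCE D_eig.
rewrite !complex_qf map_mxM mulmxA; set wC := map_mx phi w; set v := wC *m P^t*.
have vE : v^t* = P *m wC^t* by rewrite trmx_mul map_mxM trmxCK.
have -> : wC *m QC *m QC *m wC^t* = v *m diag_mx D *m diag_mx D *m v^t*.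
  by rewrite vE QCE !mulmxA mulmxtVK.
have -> : wC *m QC *m wC^t* = v *m diag_mx D *m v^t* by rewrite vE QCE !mulmxA.
clearbody v; rewrite !mul_mx_diag !mxE mulr_sumr -sumrB; apply: sumr_ge0 => k _; rewrite !mxE.
have [a -> /Q_eig /andP[a_ge0 a_le]] := D_eig k.
have -> : phi h * (v 0 k * phi a * (v 0 k)^* ) - v 0 k * phi a * phi a * (v 0 k)^* =
    phi (h * a - a * a) * (v 0 k * (v 0 k)^* ).
  by rewrite rmorphB !rmorphM; ring.
by rewrite mulr_ge0 ?mul_conjC_ge0 // ler0c subr_ge0 ler_wpM2r.
Qed.

End SymmetricSpectrum.

Lemma coercivemx_invmx_eig (R : rcfType) m (Sig : 'M[R]_m) (h1 h2 : R) :
  0 < h1 -> 0 < h2 -> Sig^T = Sig -> (forall a, eigenvalue Sig a -> h1 <= a <= h2) ->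
  coercivemx h2^-1 (invmx Sig).
Proof.
move=> h1_gt0 h2_gt0 SigS Sig_eig y.
have Sig_unit : Sig \in unitmx.
  apply: unitmx_ker0 => z zSig; apply/eqP; apply: contraTT h1_gt0 => zn0.
  have /Sig_eig/andP[h1_le _] : eigenvalue Sig 0.
    by apply/eigenvalueP; exists z; rewrite ?zSig ?scale0r.
  by rewrite -leNgt.
set w := y *m invmx Sig; have yE : y = w *m Sig by rewrite mulmxKV.
have -> : qf y (invmx Sig) = qf w Sig by rewrite {1}yE -qf_sandwich // mulmxKV.
have -> : dot y y = qf w (Sig *m Sig) by rewrite yE /qf /dot trmx_mul SigS !mulmxA.
rewrite ler_pdivrMl //; apply: qf_sqr_le => // a /Sig_eig /andP[h1_le ->].
by rewrite andbT (le_trans (ltW h1_gt0)).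
Qed.

Lemma trmx_mul_sum_outer_row (R : realType) n p (Z : 'M[R]_(n, p)) :
  Z^T *m Z = \sum_i outer_row Z i.
Proof.
apply/matrixP => a b; rewrite !mxE summxE; apply: eq_bigr => j _.
by rewrite !mxE big_ord1 !mxE.
Qed.

Lemma mxtrace_leave_one_out_le (R : realType) n p (Z : 'M[R]_(n, p)) (B : 'M[R]_p)
    (be : R) (i : 'I_n) :
  0 < be -> B^T = B -> coercivemx be B ->
  `| \tr (invmx (n%:R^-1 *: (Z^T *m Z) + B - n%:R^-1 *: outer_row Z i) *m
          invmx (n%:R^-1 *: (Z^T *m Z) + B - n%:R^-1 *: outer_row Z i) *m
          (n%:R^-1 *: \sum_(j < n | j != i) outer_row Z j))
     - \tr (invmx (n%:R^-1 *: (Z^T *m Z) + B) *m invmx (n%:R^-1 *: (Z^T *m Z) + B)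
          *m (n%:R^-1 *: (Z^T *m Z))) | <= 2 / be + 1 + 1 / be ^+ 2.
Proof.
move=> be_gt0 BS B_coercive.
have invn_gt0 : 0 < n%:R^-1 :> R by rewrite invr_gt0 ltr0n (leq_ltn_trans _ (ltn_ord i)).
set G := n%:R^-1 *: \sum_(j < n | j != i) outer_row Z j.
have -> : n%:R^-1 *: (Z^T *m Z) = G + n%:R^-1 *: ((row i Z)^T *m row i Z).
  by rewrite trmx_mul_sum_outer_row (bigD1 i) //= scalerDr addrC.
rewrite (addrAC G) addrK; apply: mxtrace_rank1_gap_le => //.
- rewrite /G linearZ /= raddf_sum; congr (_ *: _); apply: eq_bigr => j _.
  by rewrite /= /outer_row trmx_mul trmxK.
- by apply/psdmxZ/psdmx_sum => [|j _]; [exact: ltW | exact: psdmx_outer].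
Qed.

Lemma bigmax_invn_cvg0 (R : realType) (g : forall n, 'I_n -> R) (k : R) :
  (forall n i, `|g n i| <= k) ->
  \big[Num.max/0]_(i < n) (n%:R^-1 * `|g n i|) @[n --> \oo] --> 0.
Proof.
move=> g_le; have k_ge0 : 0 <= k := le_trans (normr_ge0 _) (g_le 1%N ord0).
have invn_cvg0 : (fun n : nat => n%:R^-1 : R) @ \oo --> 0.
  by apply/gtr0_cvgV0; [exists 1%N => // n /= n_ge1; rewrite ltr0n | exact: cvgr_idn].
apply: (@squeeze_cvgr _ _ _ _ (fun=> 0) (fun n => k * n%:R^-1)).
- apply: nearW => n; apply/andP; split; first exact: bigmax_ge_id.
  apply: bigmax_le => [|i _]; first by rewrite mulr_ge0 ?invr_ge0.
  by rewrite mulrC ler_wpM2r ?invr_ge0.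
- exact: cvg_cst.
- by rewrite -(mulr0 k); apply: cvgM => //; exact: cvg_cst.
Qed.

Theorem lemma5 (R : realType) (d : measure_display) (T : measurableType d)
  (P : probability T R)
  (K : nat) (p : nat -> nat) (grp : forall n, 'I_(p n) -> 'I_K)
  (gam : 'I_K -> R)
  (x : forall n, 'I_n -> 'I_(p n) -> T -> R)
  (eta C h1 h2 : R) (lam : 'I_K -> R)
  (Sig : forall n, 'M[R]_(p n)) (S : forall n, 'M[R]_(p n)) :
  (forall g, 0 < gam g) ->
  (forall g, (fun n => #|[pred j | grp n j == g]|%:R / n%:R) @ \oo --> gam g) ->
  0 < eta ->
  (forall n i j, measurable_fun setT (x n i j)) ->
  (forall n, mutually_independent P (fun ij : 'I_n * 'I_(p n) => x n ij.1 ij.2)) ->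
  (forall n, identically_distributed P (fun ij : 'I_n * 'I_(p n) => x n ij.1 ij.2)) ->
  (forall n i j, (\int[P]_w (x n i j w)%:E = 0)%E) ->
  (forall n i j, (\int[P]_w ((x n i j w) ^+ 2)%:E = 1)%E) ->
  (forall n i j, (\int[P]_w (`|x n i j w| `^ (8 + eta))%:E <= C%:E)%E) ->
  0 < h1 -> 0 < h2 ->
  (forall n, (Sig n)^T = Sig n) ->
  (forall n a, eigenvalue (Sig n) a -> h1 <= a <= h2) ->
  (forall n, is_inv_sqrt (Sig n) (S n)) ->
  (forall g, 0 < lam g) ->
  let Lam n : 'M[R]_(p n) := diag_mx (\row_j lam (grp n j)) in
  let Z n w : 'M[R]_(n, p n) := \matrix_(i, j) x n i j w in
  let A n w : 'M[R]_(p n) := n%:R^-1 *: ((Z n w)^T *m Z n w) + S n *m Lam n *m S n in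
  let M n w : 'M[R]_(p n) := invmx (A n w) in
  let Mi n w (i : 'I_n) : 'M[R]_(p n) :=
    invmx (A n w - n%:R^-1 *: outer_row (Z n w) i) in
  let dev n w : R :=
    \big[Num.max/0]_(i < n)
      (n%:R^-1 * `| \tr (Mi n w i *m Mi n w i *m
                          (n%:R^-1 *: \sum_(j < n | j != i) outer_row (Z n w) j))
                    - \tr (M n w *m M n w *m (n%:R^-1 *: ((Z n w)^T *m Z n w))) |) in
  {ae P, forall w, dev n w @[n --> \oo] --> 0}.
Proof.
move=> _ _ _ _ _ _ _ _ _ h1_gt0 h2_gt0 SigS Sig_eig S_isqrt lam_gt0 Lam Z A M Mi dev.
apply: aeW => w.
pose lmin := \big[Num.min/1]_(g < K) lam g.
have lmin_gt0 : 0 < lmin by apply: lt_bigmin.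
apply: (bigmax_invn_cvg0 (k := 2 / (lmin / h2) + 1 + 1 / (lmin / h2) ^+ 2)) => n i.
have [SS [_ SSE]] := S_isqrt n.
have Sig_inv := coercivemx_invmx_eig h1_gt0 h2_gt0 (SigS n) (Sig_eig n).
rewrite -SSE in Sig_inv.
apply: mxtrace_leave_one_out_le; first by rewrite divr_gt0.
- by rewrite !trmx_mul SS tr_diag_mx mulmxA.
- apply: coercivemx_sandwich_diag (ltW lmin_gt0) _ Sig_inv => // j.
  by rewrite mxE; exact: bigmin_le.
Qed.
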